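(* Suppose Assumption 1 holds. Then for any $\ell=1,\dots,\mathsf{L}$ the joint kernel $\bm p_\ell$ satisfies a drift condition: there exist a measurable function $V:\mathsf{X}^2\to[1,\infty)$, a small set $S\in\mathcal{B}(\mathsf{X}^2)$ for $\bm p_\ell$, and constants $\lambda\in(0,1)$, $\kappa<\infty$ such that $$(\bm P_\ell V)(\bm\theta_\ell)\le\lambda V(\bm\theta_\ell)+\kappa\mathbf 1_{\{\bm\theta_\ell\in S\}}\qquad\forall\bm\theta_\ell\in\mathsf{X}^2.$$
   Context: Setting: $\mathsf{X}$ separable Banach space, prior $\mu_{\mathrm{pr}}$; posteriors $\mu^y_j$ with $\mu_{\mathrm{pr}}$-densities $\pi^y_j$; proposal density $Q_\ell$ w.r.t. $\mu_{\mathrm{pr}}$; $\alpha_j(\theta,z)=\min\{1,\frac{\pi^y_j(z)Q_\ell(\theta)}{\pi^y_j(\theta)Q_\ell(z)}\}$. Joint kernel for $\bm\theta_\ell=(\theta_{\ell,\ell-1},\theta_{\ell,\ell})$: $\bm p_\ell(\bm\theta_\ell,A)=\int\min\{\alpha_{\ell-1}(\theta_{\ell,\ell-1},z),\alpha_\ell(\theta_{\ell,\ell},z)\}\mathbf 1_{\{(z,z)\in A\}}Q_\ell(z)\mu_{\mathrm{pr}}(\mathrm{d}z)+\int(\alpha_{\ell-1}(\theta_{\ell,\ell-1},z)-\alpha_\ell(\theta_{\ell,\ell},z))^+\mathbf 1_{\{(z,\theta_{\ell,\ell})\in A\}}Q_\ell(z)\mu_{\mathrm{pr}}(\mathrm{d}z)+\int(\alpha_\ell(\theta_{\ell,\ell},z)-\alpha_{\ell-1}(\theta_{\ell,\ell-1},z))^+\mathbf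 1_{\{(\theta_{\ell,\ell-1},z)\in A\}}Q_\ell(z)\mu_{\mathrm{pr}}(\mathrm{d}z)+\mathbf 1_{\{\bm\theta_\ell\in A\}}(1-\int\max\{\alpha_{\ell-1}(\theta_{\ell,\ell-1},z),\alpha_\ell(\theta_{\ell,\ell},z)\}Q_\ell(z)\mu_{\mathrm{pr}}(\mathrm{d}z))$, operator $(\bm P_\ell f)(\bm\theta)=\int f\,\mathrm{d}\bm p_\ell(\bm\theta,\cdot)$. A set $S$ is small for a kernel $p$ if there exist $m\in\mathbb{N}$ and a non-trivial positive measure $\nu$ with $p^m(x,A)\ge\nu(A)$ for all $x\in S$ and measurable $A$. Assumption 1: (1.1) $Q_\ell$ continuous and positive; (1.2) each $\pi^y_j$ continuous and positive; (1.3) for $j=\ell-1,\ell$, all $c_r>0$, $\{\theta: Q_\ell(\theta)/\pi^y_j(\theta)\le c_r\}$ compact; (1.4) $\exists c\in(0,1)$ independent of $\ell$ with $\operatorname{ess\,inf}_z Q_\ell(z)/\pi^y_j(z)\ge c$; (1.5) $\exists r>1,C_r$ independent of $\ell$ with $\int Q_\ell^r\mathrm{d}\mu_{\mathrm{pr}}\le C_r$. *)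

From HB Require Import structures.
From mathcomp Require Import all_boot all_order all_algebra.
From mathcomp Require Import all_classical all_reals all_analysis ess_sup_inf.
Set Implicit Arguments. Unset Strict Implicit. Unset Printing Implicit Defensive.
Import Order.TTheory GRing.Theory Num.Theory.
Import numFieldNormedType.Exports.
Local Open Scope classical_set_scope.
Local Open Scope ring_scope.

Definition separable (T : topologicalType) : Prop :=
  exists D : set T, countable D /\ dense D.

(* The Borel sigma-algebra of a normed space X: the sigma-algebra generated
   by the open sets.  [BX X] is X itself, equipped with this measurable
   structure; X * X then carries the product sigma-algebra (which equals the
   Borel sigma-algebra of X^2 for separable X). *)
Definition BX (R : realType) (X : normedModType R) : Type :=
  g_sigma_algebraType (@open X).

Section kernel.
Context (R : realType) (X : normedModType R) (mu : probability (BX X) R).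
Variables (pim pil Q : BX X -> R).
(* pim = pi^y_{l-1}, pil = pi^y_l, Q = Q_l *)

Definition alpha (pij : BX X -> R) (th z : BX X) : R :=
  Num.min 1 ((pij z * Q th) / (pij th * Q z)).

Local Open Scope ereal_scope.

(* (P_l f)(theta) = \int f d p_l(theta, .), written out for the joint kernel
   p_l of the statement (f : X^2 -> [0, +oo]). *)
Definition Pop (f : BX X * BX X -> \bar R) (th : BX X * BX X) : \bar R :=
  \int[mu]_z ((Num.min (alpha pim th.1 z) (alpha pil th.2 z) * Q z)%:E
                * f (z, z))
  + \int[mu]_z ((Num.max (alpha pim th.1 z - alpha pil th.2 z) 0 * Q z)%:E
                * f (z, th.2))
  + \int[mu]_z ((Num.max (alpha pil th.2 z - alpha pim th.1 z) 0 * Q z)%:E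
                * f (th.1, z))
  + f th * (1 - \int[mu]_z ((Num.max (alpha pim th.1 z)
                                      (alpha pil th.2 z) * Q z)%:E)).

Definition pker (th : BX X * BX X) (A : set (BX X * BX X)) : \bar R :=
  Pop (fun x => (\1_A x)%:E) th.

Definition pker_iter (m : nat) (th : BX X * BX X) (A : set (BX X * BX X))
  : \bar R := iter m Pop (fun x => (\1_A x)%:E) th.

Definition small_set (S : set (BX X * BX X)) : Prop :=
  exists m : nat, (0 < m)%N /\
  exists nu : {measure set (BX X * BX X) -> \bar R},
    0 < nu setT /\
    forall x, S x -> forall A, measurable A -> nu A <= pker_iter m x A.

End kernel.

From HB Require Import structures.
From mathcomp Require Import all_boot all_order all_algebra.
From mathcomp Require Import all_classical all_reals all_analysis ess_sup_inf.
From mathcomp Require Import ring lra.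
Import Order.TTheory GRing.Theory Num.Theory.
Import numFieldNormedType.Exports.
Import measurable_realfun.
Local Open Scope classical_set_scope.
Local Open Scope ring_scope.

(* The proof is a Doeblin argument: the whole space X^2 is small for p_l,
   so the drift condition holds with the constant Lyapunov function V = 1,
   the small set S = X^2, lambda = 1/2 and kappa = 4.
   - Assumption 1.3 (with c_r = 1) and continuity make pi_j / Q_l bounded by
     some M (lemma [bounded_ratio]).
   - Then, whatever the current state theta, alpha_j(theta, z) Q_l(z) is at
     least min(Q_l(z), pi_j(z) / M) ([alpha_density_lb]), so the diagonal
     term of p_l(theta, .) has a density bounded below by a positive
     function g independent of theta ([accept_floor_le], [pker_ge_diag]).
   - Some superlevel set E = {g >= eps} has positive mu-measure
     ([superlevel_pos]); hence p_l(theta, A) >= eps mu({z in E | (z,z) in A})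
     for all theta, i.e. X^2 is small with m = 1 ([setT_small]).
   - Each of the four terms of P_l 1 is at most 1 ([Pop_one_le]). *)

(* Inversion on a real type is Borel measurable (it is continuous away from
   0, and {0} is a single point); needed for measurability of the ratios in
   the acceptance probabilities. *)
Lemma measurable_inv (R : realType) : measurable_fun setT (GRing.inv : R -> R).
Proof.
have -> : [set: R] = ~` [set 0] `|` [set 0] by rewrite setvU.
apply/measurable_funU => //; first exact: measurableC.
split; last exact: measurable_fun_set1.
apply: open_continuous_measurable_fun.
  by rewrite openC; apply/accessible_closed_set1/hausdorff_accessible/Rhausdorff.
by move=> x; rewrite inE /= => x0; apply: inv_continuous; apply/eqP.
Qed.

(* If Q, p are continuous and positive and the sublevel set {Q/p <= 1} is
   compact, then p/Q is bounded: by compactness on that set, and by 1 off it.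
   This is how Assumption 1.3 enters. *)
Lemma bounded_ratio {R : realType} {T : topologicalType} {Q p : T -> R} :
  continuous Q -> continuous p -> (forall x, 0 < Q x) -> (forall x, 0 < p x) ->
  compact [set x | Q x / p x <= 1] ->
  exists M, 0 < M /\ forall x, p x / Q x <= M.
Proof.
move=> cQ cp Qpos ppos cK.
have cpQ : continuous (fun x => p x / Q x).
  move=> x; apply: cvgM; first exact: cp.
  by apply: cvgV; [rewrite gt_eqF | exact: cQ].
have [r [_ rK]] := compact_bounded (continuous_compact (continuous_subspaceT cpQ) cK).
have /rK boundK : Num.max r 0 + 1 > r by rewrite ltr_pwDr // le_max lexx.
exists (Num.max (Num.max r 0 + 1) 1); split; first by rewrite lt_max ltr01 orbT.
move=> x; rewrite le_max; have [xK|xK] := leP (Q x / p x) 1.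
  by rewrite (le_trans (ler_norm _)) //; apply: boundK; exists x.
rewrite (ltW (_ : _ < 1)) ?orbT // -invf_div.
by rewrite invf_lt1 // divr_gt0.
Qed.

(* The diagonal embedding z |-> (z, z) of a measurable space into its
   square; the small-set measure is a pushforward along it. *)
Definition diag {d} {T : measurableType d} (z : T) : T * T := (z, z).

Lemma measurable_diag {d} {T : measurableType d} : measurable_fun setT (@diag d T).
Proof. exact: measurable_fun_pair. Qed.

Section measure_facts.
Context {d} {T : measurableType d} {R : realType} (mu : {measure set T -> \bar R}).

Lemma density_weight_le1 {Q h : T -> R} :
  measurable_fun setT Q -> (forall x, 0 <= Q x) -> (\int[mu]_x (Q x)%:E = 1)%E ->
  measurable_fun setT h -> (forall z, 0 <= h z <= 1) ->
  (\int[mu]_z (h z * Q z)%:E <= 1)%E.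
Proof.
move=> mQ Q0 Q1 mh h01; rewrite -Q1; apply: ge0_le_integral => //.
- by move=> z _; rewrite lee_fin mulr_ge0 //; case/andP: (h01 z).
- exact/measurable_EFinP/measurable_funM.
- exact/measurable_EFinP.
- by move=> z _; rewrite lee_fin ler_piMl //; case/andP: (h01 z).
Qed.

Definition superlevel (g : T -> R) (eps : R) : set T := [set z | eps <= g z].

Lemma measurable_superlevel {g : T -> R} eps :
  measurable_fun setT g -> measurable (superlevel g eps).
Proof.
move=> mg; rewrite -[X in measurable X]setTI.
have -> : superlevel g eps = g @^-1` `[eps, +oo[%classic.
  by apply/seteqP; split=> z /=; rewrite in_itv /= andbT.
exact: mg.
Qed.

(* A positive measurable function on a space of positive measure is bounded
   below by some 1/(n+1) on a set of positive measure: otherwise the sets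
   {g >= 1/(n+1)}, which cover T, would all be null. *)
Lemma superlevel_pos {g : T -> R} :
  measurable_fun setT g -> (forall z, 0 < g z) -> (0 < mu setT)%E ->
  exists n, (0 < mu (superlevel g n.+1%:R^-1))%E.
Proof.
move=> mg gpos muT; apply: contrapT => nopos.
have null n : mu (superlevel g n.+1%:R^-1) = 0%E.
  apply/eqP; rewrite eq_le measure_ge0 andbT leNgt; apply/negP => h.
  by apply: nopos; exists n.
have : (mu setT <= \sum_(n <oo) mu (superlevel g n.+1%:R^-1))%E.
  apply: measure_sigma_subadditive => [n|//|z _]; first exact: measurable_superlevel.
  have [k hk] := ltr_add_invr (gpos z).
  by exists k => //=; apply/ltW; rewrite add0r in hk.
by rewrite eseries0 // leNgt muT.
Qed.

Lemma integral_ge_cst_on (f : T -> \bar R) (S : set T) (eps : R) :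
  measurable S -> measurable_fun setT f -> (forall z, 0 <= f z)%E -> 0 <= eps ->
  (forall z, S z -> eps%:E <= f z)%E -> (eps%:E * mu S <= \int[mu]_z f z)%E.
Proof.
move=> mS mf f0 eps0 fS.
have -> : (eps%:E * mu S = \int[mu]_z (eps * \1_S z)%:E)%E.
  rewrite (integralZl_indic measurableT (fun=> S)) //; last by rewrite ltNge eps0.
  by rewrite integral_indic // setIT.
apply: ge0_le_integral => //.
- by move=> z _; rewrite lee_fin mulr_ge0.
- exact/measurable_EFinP/measurable_funM.
- move=> z _; rewrite indicE; have [/set_mem Sz|_] := boolP (z \in S).
    by rewrite mulr1 fS.
  by rewrite mulr0 f0.
Qed.

End measure_facts.

Lemma min_in01 {R : realDomainType} {a b : R} :
  0 <= a <= 1 -> 0 <= b <= 1 -> 0 <= Num.min a b <= 1.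
Proof. by move=> /andP[a0 a1] /andP[b0 b1]; rewrite le_min a0 b0 ge_min a1. Qed.

Lemma max_in01 {R : realDomainType} {a b : R} :
  0 <= a <= 1 -> 0 <= b <= 1 -> 0 <= Num.max a b <= 1.
Proof. by move=> /andP[a0 a1] /andP[b0 b1]; rewrite le_max a0 ge_max a1 b1. Qed.

Lemma posdiff_in01 {R : realDomainType} {a b : R} :
  0 <= a <= 1 -> 0 <= b <= 1 -> 0 <= Num.max (a - b) 0 <= 1.
Proof.
move=> /andP[a0 a1] /andP[b0 b1]; rewrite le_max lexx orbT ge_max ler01 andbT.
by rewrite lerBlDr (le_trans a1) // lerDl.
Qed.

Section acceptance.
Context {R : realType} {X : normedModType R} {Q p : BX X -> R}.
Hypotheses (Qpos : forall x, 0 < Q x) (ppos : forall x, 0 < p x).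

Lemma measurable_alpha th :
  measurable_fun setT Q -> measurable_fun setT p ->
  measurable_fun setT (alpha Q p th).
Proof.
move=> mQ mp; apply: measurable_minr => //.
apply: measurable_funM; first exact: measurable_funM.
exact/(measurableT_comp (measurable_inv R))/measurable_funM.
Qed.

Lemma alpha_in01 th z : 0 <= alpha Q p th z <= 1.
Proof.
rewrite le_min ler01 ge_min lexx /= andbT.
by rewrite ltW // divr_gt0 // mulr_gt0.
Qed.

Lemma alpha_density_lb M th z : 0 < M -> p th / Q th <= M ->
  Num.min (Q z) (p z / M) <= alpha Q p th z * Q z.
Proof.
move=> M0 hM; have Qz := Qpos z; have Qth := Qpos th; have pth := ppos th.
rewrite /alpha minr_pMl ?mul1r; last exact: ltW.
have -> : p z * Q th / (p th * Q z) * Q z = p z * (p th / Q th)^-1.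
  by field; rewrite !gt_eqF.
rewrite le_min ge_min lexx /= ge_min; apply/orP; right.
by rewrite ler_wpM2l ?(ltW (ppos z)) // lef_pV2 // posrE divr_gt0.
Qed.

End acceptance.

Section joint_kernel.
Context {R : realType} {X : normedModType R} (mu : probability (BX X) R).
Context {pim pil Q : BX X -> R}.
Hypotheses (mQ : measurable_fun setT Q) (Qpos : forall x, 0 < Q x)
  (Q1 : (\int[mu]_x (Q x)%:E = 1)%E).
Hypotheses (mpim : measurable_fun setT pim) (pimpos : forall x, 0 < pim x).
Hypotheses (mpil : measurable_fun setT pil) (pilpos : forall x, 0 < pil x).

(* [density_weight_le1] for Q = Q_l, in the shape of the integrands of Pop
   applied to the constant function 1. *)
Let Qweight_le1 {h : BX X -> R} :
  measurable_fun setT h -> (forall z, 0 <= h z <= 1) ->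
  (\int[mu]_z ((h z * Q z)%:E * 1%:E) <= 1)%E.
Proof.
move=> mh h01; under eq_integral do rewrite mule1.
by apply: (density_weight_le1 mu mQ _ Q1 mh h01) => x; exact: ltW.
Qed.

(* The kernel has total mass at most 4 (each of its four terms is a
   sub-probability); this gives the drift inequality for V = 1. *)
Lemma Pop_one_le th : (Pop mu pim pil Q (fun=> 1%:E) th <= 4%:E)%E.
Proof.
have a1 z := alpha_in01 Qpos pimpos th.1 z.
have a2 z := alpha_in01 Qpos pilpos th.2 z.
have ma1 := measurable_alpha th.1 mQ mpim.
have ma2 := measurable_alpha th.2 mQ mpil.
have stay_ge0 : (0 <= \int[mu]_z ((Num.max (alpha Q pim th.1 z) (alpha Q pil th.2 z)
                                  * Q z)%:E))%E.
  apply: integral_ge0 => z _; rewrite lee_fin mulr_ge0 ?(ltW (Qpos z)) //.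
  by case/andP: (max_in01 (a1 z) (a2 z)).
have T1 := Qweight_le1 (measurable_minr ma1 ma2) (fun z => min_in01 (a1 z) (a2 z)).
have T2 := Qweight_le1 (measurable_maxr (measurable_funB ma1 ma2)
  (measurable_cst (0 : R))) (fun z => posdiff_in01 (a1 z) (a2 z)).
have T3 := Qweight_le1 (measurable_maxr (measurable_funB ma2 ma1)
  (measurable_cst (0 : R))) (fun z => posdiff_in01 (a2 z) (a1 z)).
have T4 : (1 * (1 - \int[mu]_z ((Num.max (alpha Q pim th.1 z) (alpha Q pil th.2 z)
                                  * Q z)%:E)) <= 1)%E.
  by rewrite mul1e; apply: le_trans (leeB (lexx 1%E) stay_ge0) _; rewrite sube0.
apply: le_trans (leeD (leeD (leeD T1 T2) T3) T4) _.
by rewrite -!EFinD lee_fin; lra.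
Qed.

(* Dropping the three nonnegative terms in which at most one coordinate
   moves, the kernel dominates its "both chains accept" (diagonal) term. *)
Lemma pker_ge_diag th A :
  (\int[mu]_z ((Num.min (alpha Q pim th.1 z) (alpha Q pil th.2 z) * Q z)%:E
               * (\1_A (z, z))%:E) <= pker mu pim pil Q th A)%E.
Proof.
have a1 z := alpha_in01 Qpos pimpos th.1 z.
have a2 z := alpha_in01 Qpos pilpos th.2 z.
have ind0 y : (0 <= (\1_A y : R)%:E)%E by rewrite lee_fin indicE ler0n.
have Qz z := ltW (Qpos z).
have move1 : (0 <= \int[mu]_z ((Num.max (alpha Q pim th.1 z - alpha Q pil th.2 z) 0
    * Q z)%:E * (\1_A (z, th.2))%:E))%E.
  apply: integral_ge0 => z _; rewrite mule_ge0 // lee_fin mulr_ge0 //.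
  by case/andP: (posdiff_in01 (a1 z) (a2 z)).
have move2 : (0 <= \int[mu]_z ((Num.max (alpha Q pil th.2 z - alpha Q pim th.1 z) 0
    * Q z)%:E * (\1_A (th.1, z))%:E))%E.
  apply: integral_ge0 => z _; rewrite mule_ge0 // lee_fin mulr_ge0 //.
  by case/andP: (posdiff_in01 (a2 z) (a1 z)).
have stay : (0 <= (\1_A th)%:E * (1 - \int[mu]_z ((Num.max (alpha Q pim th.1 z)
    (alpha Q pil th.2 z) * Q z)%:E)))%E.
  rewrite mule_ge0 // sube_ge0 ?orbT //.
  apply: (density_weight_le1 mu mQ Qz Q1 (measurable_maxr _ _)).
  - exact: measurable_alpha.
  - exact: measurable_alpha.
  - by move=> z; apply: max_in01.
exact: lee_paddr stay (lee_paddr move2 (lee_paddr move1 (lexx _))).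
Qed.

(* Common lower bound, independent of the current state, for the density of
   the diagonal term, given bounds M on pi_{l-1}/Q and pi_l/Q. *)
Definition accept_floor (M : R) (z : BX X) : R :=
  Num.min (Q z) (Num.min (pim z / M) (pil z / M)).

Lemma accept_floor_le M th z : 0 < M ->
  pim th.1 / Q th.1 <= M -> pil th.2 / Q th.2 <= M ->
  accept_floor M z <= Num.min (alpha Q pim th.1 z) (alpha Q pil th.2 z) * Q z.
Proof.
move=> M0 hm hl; rewrite minr_pMl ?(ltW (Qpos z)) // le_min.
rewrite (le_trans _ (alpha_density_lb Qpos pimpos _ _ z M0 hm)) /=; last first.
  by rewrite le_min !ge_min lexx /= lexx orbT.
rewrite (le_trans _ (alpha_density_lb Qpos pilpos _ _ z M0 hl)) //.
by rewrite le_min !ge_min lexx /= lexx !orbT.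
Qed.

(* Doeblin minorization: if pi_{l-1}/Q and pi_l/Q are bounded, the whole
   space X^2 is small for the joint kernel, with m = 1 and
   nu(A) = eps mu({z in E | (z, z) in A}) for a superlevel set E of the
   floor density of positive measure. *)
Lemma setT_small M : 0 < M ->
  (forall x, pim x / Q x <= M) -> (forall x, pil x / Q x <= M) ->
  small_set mu pim pil Q setT.
Proof.
move=> M0 hm hl.
have mfloor : measurable_fun setT (accept_floor M).
  apply: measurable_minr => //; apply: measurable_minr;
    exact/measurable_funM/measurable_cst.
have floor_pos z : 0 < accept_floor M z.
  by rewrite !lt_min Qpos !divr_gt0.
have mu_pos : (0 < mu setT)%E by rewrite probability_setT lte01.
have [n En] := superlevel_pos mu mfloor floor_pos mu_pos.
set eps : R := n.+1%:R^-1; set E := superlevel _ eps in En.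
have mE : measurable E := measurable_superlevel eps mfloor.
have eps0 : 0 <= eps by rewrite invr_ge0.
exists 1%N; split => //.
unshelve eexists (mscale (NngNum eps0) (pushforward (mrestr mu mE) diag)).
  exact: measurable_diag.
rewrite /= /mscale /= /pushforward /= /mrestr /=.
split; first by rewrite preimage_setT setTI mule_gt0 // lte_fin invr_gt0.
move=> th _ A mA.
apply: le_trans (pker_ge_diag th A).
apply: integral_ge_cst_on => //.
- apply: measurableI => //; rewrite -[X in measurable X]setTI.
  exact: measurable_diag.
- apply: emeasurable_funM; apply/measurable_EFinP.
    by apply: measurable_funM => //; apply: measurable_minr;
      exact: measurable_alpha.
  exact: measurableT_comp (measurable_indic _) measurable_diag.
- move=> z; rewrite mule_ge0 // ?lee_fin ?indicE ?ler0n // mulr_ge0 ?(ltW (Qpos z)) //.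
  by case/andP: (min_in01 (alpha_in01 Qpos pimpos th.1 z)
                          (alpha_in01 Qpos pilpos th.2 z)).
- move=> z [Az Ez]; rewrite indicE mem_set // mule1 lee_fin.
  exact: le_trans Ez (accept_floor_le _ _ _ M0 (hm th.1) (hl th.2)).
Qed.

End joint_kernel.

Theorem mainTheorem6 (R : realType) (X : completeNormedModType R)
  (mu : probability (BX X) R) (L : nat)
  (pi : nat -> X -> R) (Q : nat -> X -> R) :
  separable X ->
  (* pi j : mu-density of the posterior mu^y_j, j = 0..L *)
  (forall j, (j <= L)%N ->
     measurable_fun setT (pi j : BX X -> R) /\ (forall x, 0 <= pi j x) /\
     (\int[mu]_x (pi j x)%:E = 1)%E) ->
  (* Q l : mu-density of the proposal, l = 1..L *)
  (forall l, (1 <= l <= L)%N ->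
     measurable_fun setT (Q l : BX X -> R) /\ (forall x, 0 <= Q l x) /\
     (\int[mu]_x (Q l x)%:E = 1)%E) ->
  (* Assumption 1.1 *)
  (forall l, (1 <= l <= L)%N -> continuous (Q l) /\ forall x, 0 < Q l x) ->
  (* Assumption 1.2 *)
  (forall j, (j <= L)%N -> continuous (pi j) /\ forall x, 0 < pi j x) ->
  (* Assumption 1.3 *)
  (forall l, (1 <= l <= L)%N -> forall j, j = l.-1 \/ j = l ->
     forall cr : R, 0 < cr -> compact [set th : X | Q l th / pi j th <= cr]) ->
  (* Assumption 1.4 *)
  (exists c : R, 0 < c < 1 /\
     forall l, (1 <= l <= L)%N -> forall j, j = l.-1 \/ j = l ->
       (c%:E <= ess_inf mu (fun z : BX X => (Q l z / pi j z)%:E))%E) ->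
  (* Assumption 1.5 *)
  (exists r C_r : R, 1 < r /\
     forall l, (1 <= l <= L)%N ->
       (\int[mu]_z ((Q l z) `^ r)%:E <= C_r%:E)%E) ->
  forall l, (1 <= l <= L)%N ->
    exists V : BX X * BX X -> R,
      measurable_fun setT V /\ (forall x, 1 <= V x) /\
    exists S : set (BX X * BX X),
      measurable S /\ small_set mu (pi l.-1) (pi l) (Q l) S /\
    exists lam kappa : R, 0 < lam < 1 /\
      forall th : BX X * BX X,
        (Pop mu (pi l.-1) (pi l) (Q l) (fun x => (V x)%:E) th
         <= (lam * V th)%:E + (kappa * \1_S th)%:E)%E.
Proof.
move=> _ hpi hQ hQc hpic hcomp _ _ l hl.
have lL : (l <= L)%N by case/andP: hl.
have l1L : (l.-1 <= L)%N := leq_trans (leq_pred l) lL.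
have [mQ [_ Q1]] := hQ l hl.
have [cQ Qpos] := hQc l hl.
have [[mpim _] [cpim pimpos]] := (hpi _ l1L, hpic _ l1L).
have [[mpil _] [cpil pilpos]] := (hpi _ lL, hpic _ lL).
(* Assumption 1.3 with c_r = 1 bounds both ratios pi_j / Q_l. *)
have [Mm [Mm0 hMm]] := bounded_ratio cQ cpim Qpos pimpos
  (hcomp l hl _ (or_introl erefl) 1 ltr01).
have [Ml [Ml0 hMl]] := bounded_ratio cQ cpil Qpos pilpos
  (hcomp l hl _ (or_intror erefl) 1 ltr01).
have small : small_set mu (pi l.-1) (pi l) (Q l) setT.
  have M0 : 0 < Mm + Ml by rewrite addr_gt0.
  apply: (setT_small mu mQ Qpos Q1 mpim pimpos mpil pilpos _ M0).
  - by move=> x; rewrite (le_trans (hMm x)) // lerDl ltW.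
  - by move=> x; rewrite (le_trans (hMl x)) // lerDr ltW.
(* Drift with V = 1 and S = X^2: P_l V <= 4 <= V / 2 + 4. *)
exists (fun=> 1); split; first exact: measurable_cst.
split=> //; exists setT; split=> //; split=> //.
exists (1 / 2), 4; split; first by rewrite divr_gt0 //= ltr_pdivrMr // mul1r ltr1n.
move=> th; rewrite indicE mem_set //.
apply: le_trans (Pop_one_le mu mQ Qpos Q1 mpim pimpos mpil pilpos th) _.
by rewrite -EFinD lee_fin mulr1 mulr1n; lra.
Qed.
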